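(* The center of $SV\#_\alpha G$ equals the invariant subalgebra $(SV)^G$, and $(SV)^G$ is generated as an algebra by $x_1^\ell,\ldots,x_n^\ell$ and $x_1x_2\cdots x_n$.
   Context: Fix integers $n\ge 3$ and $\ell\ge 2$, and let $\zeta$ be a primitive $\ell$-th root of unity. Let $V=\mathbb{C}^n$ with standard basis $x_1,\ldots,x_n$, $SV=\mathbb{C}[x_1,\ldots,x_n]$ its symmetric algebra, and let $G$ be the group of all diagonal matrices $g\in SL_n(\mathbb{C})$ with $g^\ell=1$, acting on $SV$. For $i=1,\ldots,n$ (indices mod $n$) let $g_i\in G$ be given by $g_i(x_i)=\zeta x_i$, $g_i(x_{i+1})=\zeta^{-1}x_{i+1}$, $g_i(x_j)=x_j$ otherwise; $g_1,\ldots,g_{n-1}$ freely generate $G\cong(\mathbb{Z}/\ell\mathbb{Z})^{n-1}$. Define the 2-cocycle $\alpha$ by $\alpha(g_1^{i_1}\cdots g_{n-1}^{i_{n-1}},g_1^{j_1}\cdots g_{n-1}^{j_{n-1}})=\zeta^{-i_1j_2-\cdots-i_{n-2}j_{n-1}}$. $SV\#_\alpha G$ is $SV\otimes\mathbb{C}G$ with product $(r\otimes g)(s\otimes h)=\alpha(g,h)\,r\,(g\cdot s)\otimes gh$. *)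

From HB Require Import structures.
From mathcomp Require Import all_boot all_order all_algebra.
Set Implicit Arguments. Unset Strict Implicit. Unset Printing Implicit Defensive.
Import Order.TTheory GRing.Theory Num.Theory.
Local Open Scope ring_scope.

(* ---------- The polynomial ring SV = F[x_0, ..., x_(n-1)] ----------
   Built as the iterated univariate polynomial ring
   F[x_0][x_1]...[x_(n-1)]  (0-based variable indices). *)
Fixpoint mpoly (F : comNzRingType) (n : nat) : comNzRingType :=
  match n with
  | 0 => F
  | m.+1 => ({poly mpoly F m} : comNzRingType)
  end.

Fixpoint cst (F : comNzRingType) (m : nat) : F -> mpoly F m :=
  match m return F -> mpoly F m with
  | 0 => fun a => a
  | m'.+1 => fun a => ((cst m' a)%:P : {poly mpoly F m'})
  end.

(* the variable x_j in F[x_0..x_(m-1)]  (0 if j >= m, never used) *)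
Fixpoint var (F : comNzRingType) (m : nat) (j : nat) : mpoly F m :=
  match m return mpoly F m with
  | 0 => 0
  | m'.+1 => (if j == m' then 'X else (var F m' j)%:P : {poly mpoly F m'})
  end.

Fixpoint subst (F : comNzRingType) (N : nat) (ys : nat -> mpoly F N) (m : nat)
  : mpoly F m -> mpoly F N :=
  match m return mpoly F m -> mpoly F N with
  | 0 => fun a => cst N a
  | m'.+1 => fun p : {poly mpoly F m'} =>
      \sum_(i < size p) subst ys p`_i * ys m' ^+ i
  end.

(* ---------- The group G ----------
   G = (Z/lZ)^(n-1): g = g_1^(i_1) ... g_(n-1)^(i_(n-1)) is represented by
   its exponent vector (i_1, ..., i_(n-1)), stored 0-based as
   (g 0, ..., g (n-2)). *)
Definition grp (n l : nat) := {ffun 'I_n.-1 -> 'Z_l}.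

Definition gmul (n l : nat) (g h : grp n l) : grp n l := [ffun k => g k + h k].
Definition gone (n l : nat) : grp n l := [ffun _ => 0].

(* exponent of the (k+1)-st generator (0-based k), 0 out of range *)
Definition gexp (n l : nat) (g : grp n l) (k : nat) : nat :=
  match (insub k : option 'I_n.-1) with Some i => val (g i) | None => 0%N end.

(* Scalar by which the generator g_(k+1) (0-based k) acts on x_j (0-based):
   zeta on x_k, zeta^-1 on x_(k+1), 1 otherwise. *)
Definition gen_char (F : fieldType) (zeta : F) (k j : nat) : F :=
  if j == k then zeta else if j == k.+1 then zeta^-1 else 1.

Definition chi (F : fieldType) (n l : nat) (zeta : F) (g : grp n l) (j : nat) : F :=
  \prod_(k < n.-1) gen_char zeta k j ^+ gexp g k.

Definition act (F : fieldType) (n l : nat) (zeta : F) (g : grp n l)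
  (f : mpoly F n) : mpoly F n :=
  subst (fun j => cst n (chi zeta g j) * var F n j) f.

Definition sv_invariant (F : fieldType) (n l : nat) (zeta : F) (f : mpoly F n) : Prop :=
  forall g : grp n l, act zeta g f = f.

Definition alpha (F : fieldType) (n l : nat) (zeta : F) (g h : grp n l) : F :=
  (\prod_(k < n.-2) zeta ^+ (gexp g k * gexp h k.+1))^-1.

(* ---------- The twisted group algebra SV #_alpha G ----------
   An element  sum_g r_g (x) g  is represented by g |-> r_g. *)
Definition twalg (F : fieldType) (n l : nat) := {ffun grp n l -> mpoly F n}.

(* bilinear extension of (r (x) g)(s (x) h) = alpha(g,h) r (g.s) (x) gh *)
Definition twmul (F : fieldType) (n l : nat) (zeta : F) (a b : twalg F n l)
  : twalg F n l :=
  [ffun k => \sum_(g : grp n l) \sum_(h : grp n l | gmul g h == k)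
               cst n (alpha zeta g h) * a g * act zeta g (b h)].

Definition emb (F : fieldType) (n l : nat) (r : mpoly F n) : twalg F n l :=
  [ffun g => if g == gone n l then r else 0].

Definition gens (F : fieldType) (n l : nat) (j : nat) : mpoly F n :=
  if (j < n)%N then var F n j ^+ l else \prod_(i < n) var F n i.

(* An element z = sum_g r_g (x) g commuting with x_j (x) 1 satisfies
   r_g (chi_g(j) - 1) x_j = 0; since G acts faithfully on the variables this
   kills every r_g with g <> 1, and commuting with 1 (x) h then says that r_1
   is h-invariant.  Conversely, as alpha is normalised, r (x) 1 is central
   for invariant r.
   The generator g_k multiplies the monomial x^e by zeta^(e_k - e_(k+1)), so an
   invariant polynomial is supported on monomials with
   e_1 = ... = e_n = r (mod l); such a monomial equals
   (x_1 ... x_n)^r * prod_j (x_j^l)^(e_j div l). *)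

From HB Require Import structures.
From mathcomp Require Import all_boot all_order all_algebra.
From mathcomp Require Import ring.
Import Order.TTheory GRing.Theory Num.Theory.
Set Implicit Arguments. Unset Strict Implicit.
Local Open Scope ring_scope.

Section Substitution.
Variable F : comNzRingType.

Lemma cst_is_zmod_morphism m : zmod_morphism (@cst F m).
Proof. by elim: m => [//|m IH] a b /=; rewrite IH rmorphB. Qed.

Lemma cst_is_monoid_morphism m : monoid_morphism (@cst F m).
Proof. by elim: m => [//|m [IH1 IHM]]; split=> [|a b] /=; rewrite ?IH1 ?IHM ?rmorphM. Qed.

HB.instance Definition _ m :=
  GRing.isZmodMorphism.Build _ _ (@cst F m) (@cst_is_zmod_morphism m).
HB.instance Definition _ m :=
  GRing.isMonoidMorphism.Build _ _ (@cst F m) (@cst_is_monoid_morphism m).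

Lemma subst_is_rmorphism N (ys : nat -> mpoly F N) m :
  [/\ zmod_morphism (subst ys (m:=m)), monoid_morphism (subst ys (m:=m))
    & forall a, subst ys (cst m a) = cst N a].
Proof.
elim: m => [|m [fB fM fC]].
  by split=> //; [exact: (@rmorphB _ _ (@cst F N)) |
                   exact: (rmorphism_monoidP (@cst F N))].
pose fR : {rmorphism mpoly F m -> mpoly F N} :=
  HB.pack (subst ys (m:=m)) (GRing.isZmodMorphism.Build _ _ _ fB)
    (GRing.isMonoidMorphism.Build _ _ _ fM).
have hornerE p : subst ys (m:=m.+1) p = (map_poly fR p).[ys m].
  rewrite (horner_coef_wide _ (size_poly _ _)).
  by apply: eq_bigr => i _; rewrite coef_map_id0 // rmorph0.
split=> [p q|| a]; rewrite ?hornerE.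
- by rewrite rmorphB hornerD hornerN.
- by split=> [|p q]; rewrite !hornerE ?rmorph1 ?hornerC // rmorphM hornerM.
- have -> : cst m.+1 a = (cst m a)%:P by [].
  by rewrite map_polyC hornerC /= fC.
Qed.

Section Instances.
Variables (N : nat) (ys : nat -> mpoly F N) (m : nat).

HB.instance Definition _ := GRing.isZmodMorphism.Build _ _ (subst ys (m:=m))
  (let: And3 h _ _ := subst_is_rmorphism ys m in h).
HB.instance Definition _ := GRing.isMonoidMorphism.Build _ _ (subst ys (m:=m))
  (let: And3 _ h _ := subst_is_rmorphism ys m in h).

Lemma subst_cst a : subst ys (cst m a) = cst N a.
Proof. by case: (subst_is_rmorphism ys m). Qed.

End Instances.

Lemma eq_subst N (ys ys' : nat -> mpoly F N) m :
  (forall j, (j < m)%N -> ys j = ys' j) -> subst ys (m:=m) =1 subst ys' (m:=m).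
Proof.
elim: m => [//|m IH] eq_ys p /=; apply: eq_bigr => i _.
by rewrite eq_ys // IH // => j /ltnW; apply: eq_ys.
Qed.

Lemma subst_polyC_map N (ys : nat -> mpoly F N) m (q : mpoly F m) :
  subst (fun j => (ys j)%:P : mpoly F N.+1) q = (subst ys q)%:P.
Proof.
elim: m q => [//|m IH] q /=.
by rewrite rmorph_sum; apply: eq_bigr => i _; rewrite IH rmorphM rmorphXn.
Qed.

Lemma var_last m : var F m.+1 m = 'X.
Proof. by rewrite /= eqxx. Qed.

Lemma var_ltn m j : (j < m)%N -> var F m.+1 j = (var F m j)%:P.
Proof. by move=> lt_jm /=; rewrite ifN // neq_ltn lt_jm. Qed.

Lemma subst_var_id m (f : mpoly F m) : subst (var F m) f = f.
Proof.
elim: m f => [//|m IH] p /=.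
rewrite -[RHS]coefK poly_def; apply: eq_bigr => i _.
rewrite (@eq_subst _ _ (fun j => (var F m j)%:P : mpoly F m.+1)) => [|j].
  by rewrite subst_polyC_map IH eqxx mul_polyC.
exact: var_ltn.
Qed.

Lemma subst_wide N (ys : nat -> mpoly F N) m (p : {poly mpoly F m}) k :
  (size p <= k)%N -> subst ys (m:=m.+1) p = \sum_(i < k) subst ys p`_i * ys m ^+ i.
Proof.
move=> le_pk /=; rewrite (big_ord_widen k (fun i => subst ys p`_i * ys m ^+ i)) //.
rewrite big_mkcond; apply: eq_bigr => i _; case: ltnP => // le_pi.
by rewrite nth_default // rmorph0 mul0r.
Qed.

Lemma subst_var N (ys : nat -> mpoly F N) m j :
  (j < m)%N -> subst ys (var F m j) = ys j.
Proof.
elim: m => [//|m IH]; rewrite ltnS leq_eqVlt => /predU1P[->|lt_jm].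
  rewrite var_last (@subst_wide _ _ _ _ 2) ?size_polyX //.
  by rewrite big_ord_recr big_ord1 /= !coefX /= rmorph0 rmorph1 mul0r add0r mul1r.
rewrite var_ltn // (subst_wide _ (size_polyC_leq1 _)) big_ord1 coefC /=.
by rewrite expr0 mulr1 IH.
Qed.

Lemma subst_comp N N' (ys : nat -> mpoly F N) (ys' : nat -> mpoly F N') m
    (p : mpoly F m) :
  subst ys' (subst ys p) = subst (fun j => subst ys' (ys j)) p.
Proof.
elim: m p => [|m IH] p /=; first exact: subst_cst.
by rewrite rmorph_sum; apply: eq_bigr => i _; rewrite rmorphM rmorphXn -IH.
Qed.

End Substitution.

(* Keeps [/=] from unfolding these recursive definitions, so that the
   ring-morphism lemmas for [subst] keep rewriting syntactically. *)
Arguments subst : simpl never.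
Arguments var : simpl never.

(* [mcoef f e] is the coefficient of the monomial prod_(j < m) x_j^(e j) in f. *)
Fixpoint mcoef (F : comNzRingType) (m : nat) : mpoly F m -> (nat -> nat) -> F :=
  match m return mpoly F m -> (nat -> nat) -> F with
  | 0 => fun a _ => a
  | m'.+1 => fun (p : {poly mpoly F m'}) e => mcoef p`_(e m') e
  end.

Definition scalev (F : comNzRingType) (c : nat -> F) m (f : mpoly F m) : mpoly F m :=
  subst (fun j => cst m (c j) * var F m j) f.

Section MonomialCoefficients.
Variable F : comNzRingType.

Lemma eq_mcoef m (f : mpoly F m) e e' :
  (forall j, (j < m)%N -> e j = e' j) -> mcoef f e = mcoef f e'.
Proof.
elim: m f => [//|m IH] p eq_e /=.
by rewrite eq_e // IH // => j /ltnW; apply: eq_e.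
Qed.

Lemma mcoef_coef m (p : {poly mpoly F m}) i e :
  mcoef p`_i e = mcoef (p : mpoly F m.+1) [eta e with m |-> i].
Proof.
by rewrite /= eqxx; apply: eq_mcoef => j lt_jm /=; rewrite ifN // neq_ltn lt_jm.
Qed.

Lemma mcoef0 m e : mcoef (0 : mpoly F m) e = 0.
Proof. by elim: m => [//|m IH] /=; rewrite coef0 IH. Qed.

Lemma mcoef_inj m (f g : mpoly F m) : mcoef f =1 mcoef g -> f = g.
Proof.
elim: m f g => [|m IH] f g eq_fg; first exact: (eq_fg (fun _ => 0%N)).
by apply/polyP => i; apply: IH => e; rewrite !mcoef_coef.
Qed.

Lemma mcoefMcst m (f : mpoly F m) a e : mcoef (f * cst m a) e = mcoef f e * a.
Proof. by elim: m f => [//|m IH] p /=; rewrite coefMC IH. Qed.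

Lemma lreg_var m j : (j < m)%N -> GRing.lreg (var F m j).
Proof.
elim: m => [//|m IH]; rewrite ltnS leq_eqVlt => /predU1P[->|lt_jm].
  by rewrite var_last; apply/monic_lreg/monicX.
rewrite var_ltn //; apply: mulrI0_lreg => p /polyP p0; apply/polyP => i.
by rewrite coef0; apply: (IH lt_jm); rewrite mulr0 -coefCM p0 coef0.
Qed.

Lemma scalev_coef (c : nat -> F) m (p : {poly mpoly F m}) i :
  (scalev c (p : mpoly F m.+1))`_i = scalev c p`_i * cst m (c m) ^+ i.
Proof.
rewrite /scalev (subst_wide _ (leqnn _)).
have termE k : subst (fun j => cst m.+1 (c j) * var F m.+1 j) p`_k *
    (cst m.+1 (c m) * var F m.+1 m) ^+ k =
    (subst (fun j => cst m (c j) * var F m j) p`_k * cst m (c m) ^+ k) *: 'X^k.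
  rewrite (@eq_subst _ _ _ (fun j => (cst m (c j) * var F m j)%:P : mpoly F m.+1)).
    by rewrite subst_polyC_map var_last exprMn -mul_polyC rmorphM rmorphXn mulrA.
  by move=> j lt_jm; rewrite var_ltn // rmorphM.
rewrite (eq_bigr _ (fun (k : 'I_(size p)) _ => termE k)).
rewrite -(@poly_def _ _ (fun k => scalev c p`_k * cst m (c m) ^+ k)) coef_poly.
by case: ltnP => // le_pi; rewrite nth_default // rmorph0 mul0r.
Qed.

Lemma mcoef_scalev (c : nat -> F) m (f : mpoly F m) e :
  mcoef (scalev c f) e = (\prod_(j < m) c j ^+ e j) * mcoef f e.
Proof.
elim: m f => [|m IH] f; first by rewrite big_ord0 mul1r.
by rewrite [LHS]/= scalev_coef -rmorphXn mcoefMcst IH big_ord_recr /= mulrAC.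
Qed.

End MonomialCoefficients.

Section Group.
Variables (F : fieldType) (n l : nat) (zeta : F).
Hypotheses (hl : (2 <= l)%N) (hz : l.-primitive_root zeta).
Implicit Types (g h : grp n l) (f : mpoly F n).

Lemma zeta_neq0 : zeta != 0.
Proof. by rewrite (prim_root_eq0 hz) -lt0n (prim_order_gt0 hz). Qed.

Lemma gexpE g (i : 'I_n.-1) : gexp g i = g i.
Proof. by rewrite /gexp; case: insubP => [j _ /val_inj ->|] //; rewrite ltn_ord. Qed.

Lemma gexp_out g k : (n.-1 <= k)%N -> gexp g k = 0%N.
Proof. by move=> le_nk; rewrite /gexp insubN // -leqNgt. Qed.

Lemma gexp_lt g k : (gexp g k < l)%N.
Proof.
case: (ltnP k n.-1) => [lt_kn|le_nk]; last by rewrite gexp_out // (ltn_trans _ hl).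
by rewrite (gexpE g (Ordinal lt_kn)) -[X in (_ < X)%N](Zp_cast hl) ltn_ord.
Qed.

Lemma gexp_gone k : gexp (gone n l) k = 0%N.
Proof.
case: (ltnP k n.-1) => [lt_kn|]; last exact: gexp_out.
by rewrite (gexpE _ (Ordinal lt_kn)) ffunE.
Qed.

Lemma gmul1g h : gmul (gone n l) h = h.
Proof. by apply/ffunP => i; rewrite !ffunE add0r. Qed.

Lemma gmulg1 g : gmul g (gone n l) = g.
Proof. by apply/ffunP => i; rewrite !ffunE addr0. Qed.

Lemma alpha_gone_l h : alpha zeta (gone n l) h = 1.
Proof. by rewrite /alpha big1 ?invr1 // => k _; rewrite gexp_gone. Qed.

Lemma alpha_gone_r g : alpha zeta g (gone n l) = 1.
Proof. by rewrite /alpha big1 ?invr1 // => k _; rewrite gexp_gone muln0. Qed.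

Lemma chi_gone j : chi zeta (gone n l) j = 1.
Proof. by rewrite /chi big1 // => k _; rewrite gexp_gone. Qed.

Lemma actE g f : act zeta g f = scalev (chi zeta g) f.
Proof. by []. Qed.

Lemma act_gone f : act zeta (gone n l) f = f.
Proof.
rewrite /act (@eq_subst _ _ _ (var F n)) ?subst_var_id // => j _.
by rewrite chi_gone rmorph1 mul1r.
Qed.

Lemma act0 g : act zeta g 0 = 0.
Proof. exact: rmorph0. Qed.

Lemma act_var g j :
  (j < n)%N -> act zeta g (var F n j) = cst n (chi zeta g j) * var F n j.
Proof. exact: subst_var. Qed.

Lemma gen_char_expr_order k j : gen_char zeta k j ^+ l = 1.
Proof.
rewrite /gen_char; case: ifP => _; first exact: prim_expr_order hz.
by case: ifP => _; rewrite ?expr1n // exprVn (prim_expr_order hz) invr1.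
Qed.

Lemma chi_expr_order g j : chi zeta g j ^+ l = 1.
Proof.
by rewrite /chi -prodrXl big1 // => k _; rewrite exprAC gen_char_expr_order expr1n.
Qed.

Lemma prod_gen_char_expr k (e : nat -> nat) : (k < n.-1)%N ->
  \prod_(j < n) gen_char zeta k j ^+ e j = zeta ^+ e k * zeta^-1 ^+ e k.+1.
Proof.
case: n => // n' lt_kn.
have lt_k1n : (k.+1 < n'.+1)%N by [].
rewrite (bigD1 (Ordinal (ltnW lt_k1n))) // (bigD1 (Ordinal lt_k1n)) /=; last first.
  by rewrite -val_eqE /= gtn_eqF.
rewrite big1 => [|j /andP[]]; last first.
  rewrite -!val_eqE /= => ne_jk ne_jk1.
  by rewrite /gen_char (negbTE ne_jk) (negbTE ne_jk1) expr1n.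
by rewrite /gen_char eqxx eqn_leq ltnn eqxx mulr1.
Qed.

Lemma prod_chi g : \prod_(j < n) chi zeta g j = 1.
Proof.
rewrite /chi exchange_big big1 // => k _.
rewrite prodrXl (eq_bigr (fun j : 'I_n => gen_char zeta k j ^+ 1)) => [|j _].
  by rewrite (prod_gen_char_expr (fun=> 1%N)) // !expr1 divff ?zeta_neq0 ?expr1n.
exact: expr1.
Qed.

Definition ggen k : grp n l := [ffun i : 'I_n.-1 => (val i == k)%:R].

Lemma gexp_ggen k k' : (k < n.-1)%N -> gexp (ggen k) k' = (k' == k).
Proof.
move=> lt_kn; case: (ltnP k' n.-1) => [lt_k'n|le_nk'].
  by rewrite (gexpE _ (Ordinal lt_k'n)) ffunE /=; case: eqP.
by rewrite gexp_out //; case: eqP le_nk' => // ->; rewrite leqNgt lt_kn.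
Qed.

Lemma chi_ggen k j : (k < n.-1)%N -> chi zeta (ggen k) j = gen_char zeta k j.
Proof.
move=> lt_kn; rewrite /chi (bigD1 (Ordinal lt_kn)) //= big1 => [|k'].
  by rewrite gexp_ggen // eqxx mulr1.
by rewrite -val_eqE /= => ne_k'k; rewrite gexp_ggen // (negbTE ne_k'k).
Qed.

Lemma sv_invariant_mcoef_congr f e k : sv_invariant l zeta f ->
  mcoef f e != 0 -> (k < n.-1)%N -> e k = e k.+1 %[mod l].
Proof.
move=> inv_f nz_fe lt_kn.
have := congr1 (fun p => mcoef p e) (inv_f (ggen k)); rewrite /= actE mcoef_scalev.
under eq_bigr => j _ do rewrite chi_ggen //.
rewrite prod_gen_char_expr // -[RHS]mul1r => /(mulIf nz_fe).
rewrite exprVn -div1r mulrA mulr1 => /(divr1_eq) eq_zeta.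
by apply/eqP; rewrite -(eq_prim_root_expr hz) eq_zeta.
Qed.

Lemma chi_neq1 g : g != gone n l -> exists2 j, (j < n)%N & chi zeta g j != 1.
Proof.
move=> ne_g1.
have ex_k : exists k, (k < n.-1)%N && (gexp g k != 0%N).
  have [i ne_gi] : exists i, g i != 0.
    apply/existsP; apply: contraNT ne_g1 => /existsPn g0.
    by apply/eqP/ffunP => i; rewrite ffunE; apply/eqP/negPn/g0.
  by exists i; rewrite ltn_ord gexpE; apply: contra ne_gi => /eqP gi0; apply/eqP/val_inj.
(* For the least k with g_(k+1) occurring in g, chi g k = zeta ^+ gexp g k. *)
case: (ex_minnP ex_k) => k /andP[lt_kn nz_gk] min_k.
exists k; first by apply: leq_trans lt_kn (leq_pred n).
rewrite /chi (bigD1 (Ordinal lt_kn)) //= big1 => [|k' ne_k'k]; last first.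
  rewrite /gen_char eq_sym -val_eqE /= in ne_k'k *; rewrite (negbTE ne_k'k).
  case: eqP => [def_k|_]; last exact: expr1n.
  case: (posnP (gexp g k')) => [->|gt0]; first exact: expr0.
  by have := min_k k'; rewrite ltn_ord -lt0n gt0 def_k ltnn => /(_ isT).
rewrite /gen_char eqxx mulr1 -(prim_order_dvd hz).
by apply: contraL (gexp_lt g k) => /dvdn_leq; rewrite lt0n nz_gk -leqNgt; apply.
Qed.

End Group.

Section Center.
Variables (F : fieldType) (n l : nat) (zeta : F).
Hypotheses (hl : (2 <= l)%N) (hz : l.-primitive_root zeta).
Implicit Types (a b z : twalg F n l) (r : mpoly F n).

Local Notation central z := (forall w, twmul zeta z w = twmul zeta w z).

Lemma emb_gone r : emb l r (gone n l) = r.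
Proof. by rewrite ffunE eqxx. Qed.

Lemma emb_out r g : g != gone n l -> emb l r g = 0.
Proof. by move=> ne_g1; rewrite ffunE (negbTE ne_g1). Qed.

Lemma twmul_emb_l r b k : twmul zeta (emb l r) b k = r * b k.
Proof.
rewrite /twmul ffunE (bigD1 (gone n l)) //= [X in _ + X]big1 ?addr0 => [|g ne_g1].
  rewrite (big_pred1 k) => [|h]; last by rewrite /= gmul1g.
  by rewrite alpha_gone_l rmorph1 emb_gone mul1r act_gone.
by apply: big1 => h _; rewrite emb_out // mulr0 mul0r.
Qed.

Lemma twmul_emb_r a r k : twmul zeta a (emb l r) k = a k * act zeta k r.
Proof.
rewrite /twmul ffunE (bigD1 k) //= [X in _ + X]big1 ?addr0 => [|g ne_gk].
  rewrite (bigD1 (gone n l)) /= ?gmulg1 // big1 ?addr0 => [|h /andP[_ ne_h1]].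
    by rewrite alpha_gone_r rmorph1 mul1r emb_gone.
  by rewrite emb_out // act0 mulr0.
apply: big1 => h /eqP def_k; case: (eqVneq h (gone n l)) => [h1|ne_h1].
  by move: ne_gk; rewrite -def_k h1 gmulg1 eqxx.
by rewrite emb_out // act0 mulr0.
Qed.

Lemma emb_central r : sv_invariant l zeta r -> central (emb l r).
Proof.
by move=> inv_r w; apply/ffunP => k; rewrite twmul_emb_l twmul_emb_r inv_r mulrC.
Qed.

Lemma central_out z g : central z -> g != gone n l -> z g = 0.
Proof.
move=> cz ne_g1; have [j lt_jn ne_chi1] := chi_neq1 hl hz ne_g1.
have := congr1 (fun w : twalg F n l => w g) (cz (emb l (var F n j))).
rewrite /= twmul_emb_l twmul_emb_r act_var // => comm_zx.
set c := chi zeta g j - 1.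
have zc0 : z g * cst n c = 0.
  apply: (lreg_var lt_jn); rewrite mulr0 rmorphB rmorph1.
  transitivity (z g * (cst n (chi zeta g j) * var F n j) - var F n j * z g).
    by ring.
  by rewrite comm_zx subrr.
have cK : cst n c * cst n c^-1 = 1 by rewrite -rmorphM divff ?subr_eq0 // rmorph1.
by rewrite -[z g]mulr1 -cK mulrA zc0 mul0r.
Qed.

Lemma central_emb z : central z -> z = emb l (z (gone n l)).
Proof.
move=> cz; apply/ffunP => g; rewrite ffunE.
by case: eqVneq => [->|ne_g1] //; apply: central_out.
Qed.

Lemma central_invariant z : central z -> sv_invariant l zeta (z (gone n l)).
Proof.
move=> cz h; pose d : twalg F n l := [ffun k => if k == h then 1 else 0].
have := congr1 (fun w : twalg F n l => w h) (cz d).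
rewrite /= (central_emb cz) twmul_emb_l twmul_emb_r !emb_gone ffunE eqxx.
by rewrite mulr1 mul1r => /esym.
Qed.

Lemma central_iff z :
  central z <-> exists2 r : mpoly F n, sv_invariant l zeta r & z = emb l r.
Proof.
split=> [cz|[r inv_r ->]]; last exact: emb_central.
by exists (z (gone n l)); [apply: central_invariant | apply: central_emb].
Qed.

End Center.

Lemma chain_eq_mod (e : nat -> nat) d N :
  (forall k, (k < N)%N -> e k = e k.+1 %[mod d]) ->
  forall j, (j <= N)%N -> e j = e N %[mod d].
Proof.
elim: N => [|N IH] e_step j; first by rewrite leqn0 => /eqP->.
rewrite leq_eqVlt => /predU1P[->//|lt_jN].
by rewrite (IH _ j) // => [|k lt_kN]; rewrite e_step // ltnW.
Qed.

Definition expn_congr (F : comNzRingType) (l m : nat) (f : mpoly F m) (r : nat) :=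
  forall e, mcoef f e != 0 -> forall j, (j < m)%N -> (e j %% l)%N = r.

Lemma expn_congr_coef (F : comNzRingType) l m (p : {poly mpoly F m}) r i :
  expn_congr l (p : mpoly F m.+1) r -> expn_congr l p`_i r.
Proof.
move=> congr_p e; rewrite mcoef_coef => /congr_p congr_e j lt_jm.
by have := congr_e j (ltnW lt_jm); rewrite /= ifN // neq_ltn lt_jm.
Qed.

Lemma expn_congr_coef_eq0 (F : comNzRingType) l m (p : {poly mpoly F m}) r i :
  expn_congr l (p : mpoly F m.+1) r -> (i %% l)%N != r -> p`_i = 0.
Proof.
move=> congr_p ne_ir; apply: mcoef_inj => e; rewrite mcoef0 mcoef_coef.
apply/eqP; apply: contraR ne_ir => /congr_p/(_ m (ltnSn m)).
by rewrite /= eqxx => ->.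
Qed.

Section Invariants.
Variables (F : fieldType) (n l : nat) (zeta : F).
Hypothesis hz : l.-primitive_root zeta.

Local Notation x := (var F n).
Local Notation y := (gens F n l).

Lemma act_gens (g : grp n l) j : (j < n.+1)%N -> act zeta g (y j) = y j.
Proof.
rewrite ltnS leq_eqVlt /gens => /predU1P[->|lt_jn]; last first.
  rewrite lt_jn /act rmorphXn /= subst_var // exprMn -rmorphXn.
  by rewrite chi_expr_order // rmorph1 mul1r.
rewrite ltnn /act rmorph_prod.
under eq_bigr => i _ do rewrite /= subst_var //.
by rewrite big_split /= -rmorph_prod prod_chi // rmorph1 mul1r.
Qed.

Lemma sv_invariant_subst_gens (P : mpoly F n.+1) : sv_invariant l zeta (subst y P).
Proof. by move=> g; rewrite /act subst_comp; apply: eq_subst => j; apply: act_gens. Qed.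

Definition prod_var m : mpoly F n := \prod_(j < m) x j.

Lemma gens_last : y n = prod_var n.
Proof. by rewrite /gens ltnn. Qed.

Lemma prod_var_mul_expn m (q : mpoly F n) i H : (m < n)%N ->
  q = prod_var m ^+ (i %% l) * subst y H ->
  q * x m ^+ i = prod_var m.+1 ^+ (i %% l) * subst y (H * var F n.+1 m ^+ (i %/ l)).
Proof.
move=> lt_mn ->; rewrite rmorphM rmorphXn /= subst_var 1?ltnW //.
have -> : y m = x m ^+ l by rewrite /gens lt_mn.
have -> : x m ^+ i = (x m ^+ l) ^+ (i %/ l) * x m ^+ (i %% l).
  by rewrite -exprM -exprD mulnC -divn_eq.
rewrite /prod_var big_ord_recr exprMn /=.
by move: (subst y H) (\prod_(_ < m) _) => c a; ring.
Qed.

Lemma expn_congr_decomp m r (f : mpoly F m) : (m <= n)%N -> expn_congr l f r ->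
  exists H : mpoly F n.+1, subst x f = prod_var m ^+ r * subst y H.
Proof.
elim: m f => [|m IH] f le_mn congr_f.
  by exists (@cst F n.+1 f); rewrite !subst_cst /prod_var big_ord0 expr1n mul1r.
rewrite (subst_wide _ (leqnn _)).
apply: (big_ind (fun q => exists H, q = prod_var m.+1 ^+ r * subst y H)).
- by exists 0; rewrite rmorph0 mulr0.
- by move=> _ _ [H1 ->] [H2 ->]; exists (H1 + H2); rewrite rmorphD mulrDr.
move=> i _; case: (eqVneq (i %% l)%N r) => [eq_ir|ne_ir].
  have [H eqH] := IH _ (ltnW le_mn) (expn_congr_coef (i := i) congr_f).
  rewrite -eq_ir in eqH *.
  by exists (H * var F n.+1 m ^+ (i %/ l)); apply: prod_var_mul_expn le_mn eqH.
by exists 0; rewrite (expn_congr_coef_eq0 congr_f ne_ir) !rmorph0 mul0r mulr0.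
Qed.

End Invariants.

Lemma sv_invariant_expn_congr (F : fieldType) n l (zeta : F) (f : mpoly F n.+1) i :
  l.-primitive_root zeta -> sv_invariant l zeta f ->
  expn_congr l (f : {poly _})`_i (i %% l).
Proof.
move=> hz inv_f e; rewrite mcoef_coef => nz_f j lt_jn.
have step k := sv_invariant_mcoef_congr (k := k) hz inv_f nz_f.
have := chain_eq_mod (N := n) step (ltnW lt_jn).
by rewrite /= eqxx ifN ?neq_ltn ?lt_jn.
Qed.

Lemma sv_invariant_iff (F : fieldType) n l (zeta : F) (f : mpoly F n) :
  l.-primitive_root zeta ->
  sv_invariant l zeta f <-> exists P : mpoly F n.+1, f = subst (gens F n l) P.
Proof.
move=> hz; split=> [|[P ->]]; last exact: sv_invariant_subst_gens.
case: n f => [|n] f inv_f; first by exists (@cst F 1 f); rewrite subst_cst.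
rewrite -[f]subst_var_id (subst_wide _ (leqnn _)).
apply: (big_ind (fun q => exists P, q = subst (gens F n.+1 l) P)).
- by exists 0; rewrite rmorph0.
- by move=> _ _ [P1 ->] [P2 ->]; exists (P1 + P2); rewrite rmorphD.
move=> i _.
have [H eqH] := expn_congr_decomp (leqnSn n) (sv_invariant_expn_congr (i := i) hz inv_f).
exists (var F n.+2 n.+1 ^+ (i %% l) * (H * var F n.+2 n ^+ (i %/ l))).
rewrite (prod_var_mul_expn (ltnSn n) eqH).
by rewrite !rmorphM !rmorphXn /= !subst_var // gens_last.
Qed.

Theorem mainTheorem5 (F : numClosedFieldType) (n l : nat) (zeta : F) :
  (3 <= n)%N -> (2 <= l)%N -> l.-primitive_root zeta ->
  (forall z : twalg F n l,
      (forall w : twalg F n l, twmul zeta z w = twmul zeta w z) <->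
      (exists2 r : mpoly F n, sv_invariant l zeta r & z = emb l r))
  /\
  (forall f : mpoly F n,
      sv_invariant l zeta f <->
      (exists P : mpoly F n.+1, f = subst (gens F n l) P)).
Proof.
move=> _ hl hz; split=> [z|f]; first exact: central_iff.
exact: sv_invariant_iff.
Qed.
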